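(* Let $G$ be a non-abelian finite simple group, $V$ a non-trivial irreducible $\mathbb{R}G$-module of odd dimension affording $\rho\colon G\to\mathrm{GL}(V)$, and $n\in\mathrm{GL}(V)$ of finite order normalizing $\rho(G)$; let $\nu\in\mathrm{Aut}(G)$ be defined by $\nu(x)=\rho^{-1}(n\rho(x)n^{-1})$. Suppose there is $g\in G$ such that $\alpha:=\mathrm{ad}_g\circ\nu$ has even order and $$\dim(V)>(|\alpha|-1)\,|C_G(\alpha_{(p)})|^{1/2}$$ for all primes $p$ dividing $|\alpha|$. Then there is $h\in G$ such that $\rho(h)n$ has eigenvalue $1$.
   Context: $\mathrm{ad}_g$ is the inner automorphism $x\mapsto gxg^{-1}$. For a prime $p$ dividing the order of $\alpha\in\mathrm{Aut}(G)$, $\alpha_{(p)}$ denotes an element of order $p$ in the cyclic group $\langle\alpha\rangle$, and $C_G(\alpha_{(p)})=\{x\in G\mid \alpha_{(p)}(x)=x\}$. *)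

From HB Require Import structures.
From mathcomp Require Import all_boot all_order all_algebra all_fingroup all_solvable.
From mathcomp Require Import mxrepresentation.
From mathcomp Require Import reals.
Set Implicit Arguments. Unset Strict Implicit. Unset Printing Implicit Defensive.
Import Order.TTheory GRing.Theory Num.Theory.

Local Open Scope group_scope.

(* ad_g : x |-> g x g^-1.  In MathComp  y ^ z = z^-1 y z, so ad_g = conj_aut G g^-1. *)
Definition ad_aut (gT : finGroupType) (G : {group gT}) (g : gT) : {perm gT} :=
  conj_aut G g^-1.

(* alpha = ad_g \o nu ; MathComp permutation product: (s * t) x = t (s x). *)
Definition alpha_of (gT : finGroupType) (G : {group gT}) (g : gT) (nu : {perm gT})
  : {perm gT} := nu * ad_aut G g.

(* alpha_(p): an element of order p in <[alpha]>, for p prime dividing #[alpha]. *)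
Definition alpha_p (gT : finGroupType) (a : {perm gT}) (p : nat) : {perm gT} :=
  a ^+ (#[a] %/ p).

Definition fixed_in (gT : finGroupType) (G : {group gT}) (b : {perm gT}) : {set gT} :=
  [set x in G | b x == x].

From HB Require Import structures.
From mathcomp Require Import all_boot all_order all_algebra all_fingroup all_solvable.
From mathcomp Require Import mxrepresentation.
From mathcomp Require Import reals.
From mathcomp Require Import polyrcf.
Import Order.TTheory GRing.Theory Num.Theory.
Local Open Scope ring_scope.

(* Put m := rG g * n, so that m rG(x) m^-1 = rG(alpha x), and let k := #[alpha].
   Over a real closed field an odd-dimensional irreducible representation has
   only scalar endomorphisms, since every matrix of odd size has a real
   eigenvalue.  Hence m^k = c with c = mu^k for a real eigenvalue mu of m; as m
   has finite order, mu = +-1, and k is even, so m^k = 1.  Then P := sum_(j<k) m^j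
   satisfies P m = P, and a nonzero row of P is a fixed vector of m as soon as
   tr P = d + sum_(0<j<k) tr(m^j) is nonzero.
   For M of finite order normalizing rG through an automorphism b, the Schur
   orthogonality relations (with tr(X^-1) = tr X for X of finite order, by an
   invariant form) give sum_x tr(rG(x) M)^2 = |G|; since
   tr(rG(y b(y)^-1) M) = tr M and the map y |-> y b(y)^-1 has fibres of size at
   most |C_G(b)|, this yields tr(M)^2 <= |C_G(b)|.  For M = m^j, 0 < j < k,
   C_G(alpha^j) lies in C_G(alpha_(p)) for some prime p dividing #[alpha], so
   the hypothesis gives (k - 1) |tr(m^j)| < d and thus tr P > 0. *)

Set Implicit Arguments. Unset Strict Implicit. Unset Printing Implicit Defensive.

Lemma sum_ord_shift (V : zmodType) N (F : nat -> V) :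
  F N = F 0%N -> \sum_(i < N) F i.+1 = \sum_(i < N) F i.
Proof.
move=> FN; apply: (addrI (F 0%N)).
by rewrite -(big_ord_recl N (fun i => F i)) big_ord_recr /= FN addrC.
Qed.

Section MatrixTrace.
Variables (R : comPzRingType) (d : nat).
Implicit Types (A X Y : 'M[R]_d) (i j : 'I_d).

Lemma mxtrace_mul_delta A i j : \tr (A *m delta_mx j i) = A i j.
Proof.
rewrite /mxtrace (bigD1 i) //= big1 => [|k nk]; rewrite mxE.
  rewrite (bigD1 j) //= big1 => [|l nl]; first by rewrite !mxE !eqxx mulr1 !addr0.
  by rewrite !mxE (negbTE nl) mulr0.
by apply: big1 => l _; rewrite !mxE (negbTE nk) andbF mulr0.
Qed.

Lemma delta_mul_mx_delta X i j (k : 'I_d) :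
  delta_mx j i *m X *m delta_mx i k = X i i *: delta_mx j k.
Proof.
apply/matrixP => a b; rewrite !mxE (bigD1 i) //= big1 => [|l nl]; last first.
  by rewrite !mxE (negbTE nl) mulr0.
rewrite !mxE eqxx /= addr0 (bigD1 i) //= big1 => [|l nl]; last first.
  by rewrite !mxE (negbTE nl) andbF mul0r.
rewrite !mxE eqxx andbT addr0.
by case: (a == j); case: (b == k); rewrite /= ?mulr1 ?mul1r ?mulr0 ?mul0r.
Qed.

Lemma mxtrace_mul_mxtrace X Y :
  \tr X * \tr Y = \sum_i \sum_j \tr (X *m delta_mx i j *m Y *m delta_mx j i).
Proof.
rewrite /mxtrace big_distrl; apply: eq_bigr => i _.
rewrite big_distrr; apply: eq_bigr => j _.
rewrite -/(mxtrace _) mxtrace_mulC !mulmxA delta_mul_mx_delta -scalemxAl.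
by rewrite mxtraceZ mxtrace_mulC mxtrace_mul_delta.
Qed.

End MatrixTrace.

Lemma invmxM (R : comUnitRingType) d (A B : 'M[R]_d) :
  A \in unitmx -> B \in unitmx -> invmx (A *m B) = invmx B *m invmx A.
Proof.
move=> Au Bu; have ABu : A *m B \in unitmx by rewrite unitmx_mul Au.
have AB_inv : A *m B *m (invmx B *m invmx A) = 1%:M.
  by rewrite mulmxA -(mulmxA A) mulmxV // mulmx1 mulmxV.
by rewrite -[LHS]mulmx1 -AB_inv mulmxA mulVmx // mul1mx.
Qed.

Lemma pow_eq1_unitmx (R : comUnitRingType) d (X : 'M[R]_d) N :
  (0 < N)%N -> X ^+ N = 1%:M -> X \in unitmx.
Proof.
case: N => // N _ XN; have [] // := @mulmx1_unit _ _ X (X ^+ N).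
by rewrite mulmxE -exprS.
Qed.

Lemma eigenvalue1_of_mxtrace_sum_pow (F : fieldType) d (M : 'M[F]_d) k :
  M ^+ k = 1%:M -> \tr (\sum_(j < k) M ^+ j) != 0 -> eigenvalue M 1.
Proof.
set P := \sum_(j < k) _ => Mk trP.
have PM : P *m M = P.
  rewrite mulmx_suml -[RHS](sum_ord_shift (F := fun j => M ^+ j)) ?Mk //.
  by apply: eq_bigr => j _; rewrite exprSr mulmxE.
have /rowV0Pn[v /submxP[w ->] v0] : P != 0 by apply: contraNneq trP => ->; rewrite mxtrace0.
by apply/eigenvalueP; exists (w *m P) => //; rewrite -mulmxA PM scale1r.
Qed.

Section RealMatrix.
Variables (R : realFieldType) (d : nat).

Lemma mulmx_trmx_self_ge0 (w : 'rV[R]_d) : 0 <= (w *m w^T) 0 0.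
Proof. by rewrite mxE; apply: sumr_ge0 => k _; rewrite mxE -expr2 sqr_ge0. Qed.

Lemma mulmx_trmx_self_eq0 (w : 'rV[R]_d) : (w *m w^T) 0 0 = 0 -> w = 0.
Proof.
have w2_ge0 k : 0 <= w 0 k * w^T k 0 by rewrite mxE -expr2 sqr_ge0.
rewrite mxE => /(psumr_eq0P (fun k _ => w2_ge0 k)) w0; apply/rowP => k.
by have /eqP := w0 k isT; rewrite !mxE -expr2 sqrf_eq0 => /eqP.
Qed.

Variables (X : 'M[R]_d) (N : nat).
Hypotheses (N_gt0 : (0 < N)%N) (XN : X ^+ N = 1%:M).

Let S := \sum_(i < N) X ^+ i *m (X ^+ i)^T.

Let S_invariant : X *m S *m X^T = S.
Proof.
rewrite mulmx_sumr mulmx_suml -[RHS](sum_ord_shift (F := fun i => X ^+ i *m (X ^+ i)^T)).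
  by apply: eq_bigr => i _; rewrite exprS -mulmxE trmx_mul !mulmxA.
by rewrite XN expr0.
Qed.

Let S_unitmx : S \in unitmx.
Proof.
rewrite -row_free_unit -kermx_eq0; apply: contraT => /rowV0Pn[v /sub_kermxP vS v0].
have vSv : \sum_(i < N) (v *m X ^+ i *m (v *m X ^+ i)^T) 0 0 = 0.
  transitivity ((v *m S *m v^T) 0 0); last by rewrite vS mul0mx mxE.
  rewrite mulmx_sumr mulmx_suml summxE.
  by apply: eq_bigr => i _; rewrite trmx_mul !mulmxA.
have := psumr_eq0P (fun i _ => mulmx_trmx_self_ge0 _) vSv (i := Ordinal N_gt0) isT.
by rewrite expr0 mulmx1 => /mulmx_trmx_self_eq0 v_eq0; rewrite v_eq0 eqxx in v0.
Qed.

Lemma mxtrace_invmx_pow_eq1 : \tr (invmx X) = \tr X.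
Proof.
have Xu := pow_eq1_unitmx N_gt0 XN.
have XSXS : X *m (S *m X^T *m invmx S) = 1%:M.
  by rewrite !mulmxA S_invariant mulmxV.
have -> : invmx X = S *m X^T *m invmx S.
  by rewrite -[LHS]mulmx1 -XSXS mulKmx.
by rewrite mxtrace_mulC mulmxA mulVmx // mul1mx mxtrace_tr.
Qed.

End RealMatrix.

Lemma odd_mx_eigenvalue (R : rcfType) d (C : 'M[R]_d) : odd d -> exists a, eigenvalue C a.
Proof.
move=> odd_d; have : ~~ odd (size (char_poly C)) by rewrite size_char_poly /= negbK.
by case/odd_poly_root => a Ca; exists a; rewrite eigenvalue_root_char.
Qed.

Lemma sum_dominated_gt0 (R : realFieldType) (D : R) (t : nat -> R) K :
  (0 < K)%N -> (forall j, (j < K)%N -> K%:R * `|t j| < D) ->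
  0 < D + \sum_(j < K) t j.
Proof.
move=> K_gt0 tD; have K_pos : (0 : R) < K%:R by rewrite ltr0n.
have sum_lt : \sum_(j < K) `|t j| < D.
  rewrite -(ltr_pM2l K_pos) mulr_sumr.
  have -> : K%:R * D = \sum_(j < K) D by rewrite sumr_const card_ord mulr_natl.
  apply: ltr_sum => [|j _]; last exact: tD.
  by apply/hasP; exists (Ordinal K_gt0); rewrite ?mem_index_enum.
rewrite -subr_gt0 in sum_lt; apply: lt_le_trans sum_lt _.
by rewrite lerD2l -sumrN; apply: ler_sum => j _; rewrite lerNl -normrN ler_norm.
Qed.

Section GroupFacts.
Local Open Scope group_scope.
Variables (gT : finGroupType) (G : {group gT}).

Lemma sum_group_mull (V : nmodType) y (F : gT -> V) :
  y \in G -> \sum_(x in G) F x = \sum_(x in G) F (y * x)%g.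
Proof.
by move=> Gy; rewrite (reindex_inj (mulgI y)); apply: eq_bigl => x; rewrite /= groupMl.
Qed.

Lemma card_twisted_fiber_le (b : {perm gT}) x :
  b \in Aut G -> (#|[set y in G | (y * (b y)^-1)%g == x]| <= #|fixed_in G b|)%N.
Proof.
move=> bA; set Y := [set y in G | _].
have [y0 Yy0 | Y0] := pickP (mem Y); last by rewrite (eq_card0 Y0).
have bM := morphM (autm_morphism bA); have bV := morphV (autm_morphism bA).
rewrite /= !(autmE bA) in bM bV.
rewrite -(card_imset _ (mulgI y0^-1)); apply: subset_leq_card.
apply/subsetP => _ /imsetP[y Yy ->]; move: Yy0 Yy; rewrite !inE.
case/andP=> Gy0 /eqP <-; case/andP=> Gy /eqP yby.
rewrite groupM ?groupV //= bM ?groupV // bV //; apply/eqP.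
have <- : y0^-1 * y * (b y)^-1 = (b y0)^-1 by rewrite -mulgA yby mulKg.
by rewrite mulgKV.
Qed.

End GroupFacts.

Lemma repr_mx_exp (R : comUnitRingType) (gT : finGroupType) (G : {group gT}) d
  (rG : mx_representation R G d) x j : x \in G -> rG (x ^+ j)%g = rG x ^+ j.
Proof.
move=> Gx; elim: j => [|j IHj]; first by rewrite expg0 repr_mx1 expr0.
by rewrite expgS exprS repr_mxM ?groupX // IHj.
Qed.

Section ReprNormalizer.
Variables (R : comUnitRingType) (gT : finGroupType) (G : {group gT}) (d : nat).
Variables (rG : mx_representation R G d) (M : 'M[R]_d) (b : {perm gT}).
Hypotheses (bA : b \in Aut G) (M_rG : forall x, x \in G -> M *m rG x = rG (b x) *m M).

Lemma repr_normalizer_exp j x :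
  x \in G -> M ^+ j *m rG x = rG ((b ^+ j)%g x) *m M ^+ j.
Proof.
elim: j x => [|j IHj] x Gx; first by rewrite expr0 expg0 perm1 mul1mx mulmx1.
rewrite exprS -mulmxE -mulmxA IHj // mulmxA M_rG ?Aut_closed ?groupX //.
by rewrite expgSr permM mulmxA.
Qed.

Lemma repr_mul_normalizer_exp x j :
  x \in G -> exists2 z, z \in G & (rG x *m M) ^+ j = rG z *m M ^+ j.
Proof.
move=> Gx; elim: j => [|j [z Gz IHj]]; first by exists 1%g; rewrite ?repr_mx1 ?expr0 ?mul1mx.
exists (z * (b ^+ j)%g x)%g; first by rewrite groupM ?Aut_closed ?groupX.
rewrite exprSr -mulmxE IHj -mulmxA (mulmxA (M ^+ j)) repr_normalizer_exp //.
by rewrite repr_mxM ?Aut_closed ?groupX // exprSr -mulmxE !mulmxA.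
Qed.

Lemma repr_mul_normalizer_finite_order x K :
  (0 < K)%N -> M ^+ K = 1%:M -> x \in G ->
  exists2 N, (0 < N)%N & (rG x *m M) ^+ N = 1%:M.
Proof.
move=> K_gt0 MK Gx; have [z Gz xMK] := repr_mul_normalizer_exp K Gx.
exists (K * #[z]%g)%N; first by rewrite muln_gt0 K_gt0 order_gt0.
by rewrite exprM xMK MK mulmx1 -repr_mx_exp // expg_order repr_mx1.
Qed.

Lemma mxtrace_repr_twisted y :
  y \in G -> \tr (rG (y * (b y)^-1)%g *m M) = \tr M.
Proof.
move=> Gy; have Gby : b y \in G by rewrite Aut_closed.
have byM : invmx (rG (b y)) *m M = M *m invmx (rG y).
  by rewrite -{1}(mulmxK (repr_mx_unit rG Gy) M) M_rG // -!mulmxA mulKmx ?repr_mx_unit.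
rewrite repr_mxM ?groupV // repr_mxV // -mulmxA byM mxtrace_mulC -mulmxA.
by rewrite mulVmx ?repr_mx_unit // mulmx1.
Qed.

End ReprNormalizer.

Section OddDimensionalRepr.
Variables (R : rcfType) (gT : finGroupType) (G : {group gT}) (d : nat).
Variable rG : mx_representation R G d.
Hypotheses (odd_d : odd d) (irr : mx_irreducible rG).

Lemma centgmx_scalar C : centgmx rG C -> exists c, C = c%:M.
Proof.
move=> cC; have [a /eigenvalueP[v vC v0]] := odd_mx_eigenvalue C odd_d.
exists a; apply/eqP; rewrite -subr_eq0; apply: contraT => Ca_neq0.
have cCa : centgmx rG (C - a%:M).
  by apply/centgmxP => x Gx; rewrite mulmxBl mulmxBr (centgmxP cC) // scalar_mxC.
have Cau := mx_Schur irr cCa Ca_neq0; case/negP: v0; apply/eqP.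
by rewrite -(mulmxK Cau v) mulmxBr vC mul_mx_scalar subrr mul0mx.
Qed.

Let avg Z := \sum_(x in G) rG x *m Z *m rG (x^-1)%g.

Let avg_scalar Z : d%:R *: avg Z = (#|G|%:R * \tr Z)%:M.
Proof.
have [|c avg_c] := @centgmx_scalar (avg Z).
  apply/centgmxP => y Gy; rewrite mulmx_suml mulmx_sumr (sum_group_mull _ Gy).
  apply: eq_bigr => x Gx; rewrite !mulmxA -repr_mxM // -!mulmxA -repr_mxM ?groupV ?groupM //.
  by rewrite invMg -mulgA mulVg mulg1.
have tr_avg : \tr (avg Z) = #|G|%:R * \tr Z.
  rewrite raddf_sum /= (eq_bigr (fun _ => \tr Z)) => [|x Gx]; first by rewrite sumr_const mulr_natl.
  by rewrite mxtrace_mulC mulmxA -repr_mxM ?groupV // mulVg repr_mx1 mul1mx.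
by rewrite -tr_avg avg_c mxtrace_scalar scale_scalar_mx mulr_natl.
Qed.

Lemma sum_mxtrace_repr_mul A B :
  d%:R * \sum_(x in G) \tr (A *m rG x) * \tr (B *m rG (x^-1)%g) = #|G|%:R * \tr (A *m B).
Proof.
have -> : \sum_(x in G) \tr (A *m rG x) * \tr (B *m rG (x^-1)%g) =
    \sum_i \sum_j \tr (A *m avg (delta_mx i j *m B) *m delta_mx j i).
  rewrite (eq_bigr _ (fun x _ => mxtrace_mul_mxtrace _ _)) exchange_big.
  apply: eq_bigr => i _; rewrite exchange_big; apply: eq_bigr => j _.
  by rewrite mulmx_sumr mulmx_suml raddf_sum /=; apply: eq_bigr => x _; rewrite !mulmxA.
rewrite mulr_sumr [in RHS]/mxtrace mulr_sumr; apply: eq_bigr => i _.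
rewrite mulr_sumr mxE mulr_sumr; apply: eq_bigr => j _.
rewrite -mxtraceZ scalemxAl scalemxAr avg_scalar mul_mx_scalar -scalemxAl mxtraceZ.
by rewrite mxtrace_mulC !mxtrace_mul_delta -mulrA (mulrC (B j i)).
Qed.

Variables (M : 'M[R]_d) (b : {perm gT}) (N : nat).
Hypotheses (N_gt0 : (0 < N)%N) (MN : M ^+ N = 1%:M) (bA : b \in Aut G).
Hypothesis M_rG : forall x, x \in G -> M *m rG x = rG (b x) *m M.

Lemma sqr_mxtrace_le_card_fixed : \tr M ^+ 2 <= #|fixed_in G b|%:R.
Proof.
pose f x := \tr (rG x *m M) ^+ 2.
have Mu := pow_eq1_unitmx N_gt0 MN.
have sum_f : \sum_(x in G) f x = #|G|%:R.
  have d_neq0 : d%:R != 0 :> R by rewrite pnatr_eq0; case: (d) odd_d.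
  apply: (mulfI d_neq0); rewrite [RHS]mulrC -[in RHS](mxtrace1 R d) -(mulmxV Mu).
  rewrite -sum_mxtrace_repr_mul; congr (_ * _); apply: eq_bigr => x Gx.
  have [K K_gt0 xMK] := repr_mul_normalizer_finite_order bA M_rG N_gt0 MN Gx.
  rewrite repr_mxV // -invmxM ?repr_mx_unit // (mxtrace_invmx_pow_eq1 K_gt0 xMK).
  by rewrite mxtrace_mulC /f expr2.
have sum_twisted : \sum_(y in G) f (y * (b y)^-1)%g = #|G|%:R * \tr M ^+ 2.
  rewrite (eq_bigr (fun _ => \tr M ^+ 2)) => [|y Gy]; first by rewrite sumr_const mulr_natl.
  by rewrite /f (mxtrace_repr_twisted bA M_rG).
have : #|G|%:R * \tr M ^+ 2 <= #|G|%:R * #|fixed_in G b|%:R.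
  rewrite -sum_twisted -sum_f mulr_suml.
  rewrite (partition_big (fun y => (y * (b y)^-1)%g) (mem G)) /=; last first.
    by move=> y Gy; rewrite groupM ?groupV ?Aut_closed.
  apply: ler_sum => x Gx; rewrite (eq_bigr (fun _ => f x)) => [|y /andP[_ /eqP ->] //].
  rewrite sumr_const -[X in X <= _]mulr_natr; apply: ler_wpM2l; first exact: sqr_ge0.
  rewrite ler_nat.
  apply: leq_trans (card_twisted_fiber_le x bA); rewrite cardsE.
  by apply: subset_leq_card; apply/subsetP => y.
by rewrite ler_pM2l // ltr0n cardG_gt0.
Qed.

Lemma repr_normalizer_exp_order : ~~ odd #[b]%g -> M ^+ #[b]%g = 1%:M.
Proof.
move=> even_b; have [c Mb] : exists c, M ^+ #[b]%g = c%:M.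
  apply: centgmx_scalar; apply/centgmxP => x Gx.
  by rewrite (repr_normalizer_exp bA M_rG) // expg_order perm1.
have [mu /eigenvalueP[v vM v0]] := odd_mx_eigenvalue M odd_d.
have vMexp j : v *m M ^+ j = mu ^+ j *: v.
  elim: j => [|j IHj]; first by rewrite expr0 mulmx1 expr0 scale1r.
  by rewrite exprSr -mulmxE mulmxA IHj -scalemxAl vM scalerA exprSr.
have eq_scale a a' : a *: v = a' *: v -> a = a'.
  by move/eqP; rewrite -subr_eq0 -scalerBl scaler_eq0 (negbTE v0) orbF subr_eq0 => /eqP.
have mu_sqr : mu ^+ 2 = 1.
  have muN : mu ^+ N = 1 by apply: eq_scale; rewrite -vMexp MN mulmx1 scale1r.
  apply/eqP; rewrite sqr_norm_eq1 -(pexpr_eq1 N_gt0 (normr_ge0 mu)).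
  by rewrite -normrX muN normr1.
have c_eq : c = mu ^+ #[b]%g by apply: eq_scale; rewrite -vMexp Mb mul_mx_scalar.
by rewrite Mb c_eq -(odd_double_half #[b]%g) (negbTE even_b) add0n -muln2 mulnC exprM mu_sqr expr1n.
Qed.

End OddDimensionalRepr.

Section CycleFacts.
Local Open Scope group_scope.

Lemma cycle_exp_prime_divisor (gT : finGroupType) (a : gT) j :
  (0 < j < #[a])%N ->
  exists2 p, prime p /\ (p %| #[a])%N & a ^+ (#[a] %/ p) \in <[a ^+ j]>.
Proof.
case/andP=> j_gt0 j_lt; set o := #[a ^+ j].
have o_gt1 : (1 < o)%N.
  rewrite ltn_neqAle order_gt0 andbT eq_sym order_eq1 -order_dvdn.
  by apply: contraL j_lt => /(dvdn_leq j_gt0); rewrite -leqNgt.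
have p_pr := pdiv_prime o_gt1; have p_o := pdiv_dvd o; set p := pdiv o in p_pr p_o.
have p_a : (p %| #[a])%N := dvdn_trans p_o (orderXdvd a j).
exists p => //.
have /set1P/(congr1 val)/= eqH : <[(a ^+ j) ^+ (o %/ p)]>%G \in [set <[a ^+ (#[a] %/ p)]>%G].
  rewrite -cycle_sub_group // inE cycle_subG !groupX ?cycle_id //=.
  by rewrite -orderE orderXdiv ?dvdn_div // -/o divnA // mulKn // ltnW.
by rewrite -cycle_subG -eqH cycle_subG groupX ?cycle_id.
Qed.

Variables (gT : finGroupType) (G : {group gT}).

Lemma fixed_in_cycle (b c : {perm gT}) : c \in <[b]> -> fixed_in G b \subset fixed_in G c.
Proof.
case/cycleP => u ->; apply/subsetP => z; rewrite !inE => /andP[-> /eqP bz] /=.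
by elim: u => [|u /eqP IHu]; rewrite ?expg0 ?perm1 // expgSr permM IHu bz.
Qed.

Lemma alpha_of_Aut (g : gT) (nu : {perm gT}) :
  nu \in Aut G -> g \in G -> alpha_of G g nu \in Aut G.
Proof. by move=> nuA Gg; rewrite groupM // Aut_aut. Qed.

End CycleFacts.

Lemma repr_alpha_of (R : comUnitRingType) (gT : finGroupType) (G : {group gT}) d
    (rG : mx_representation R G d) (n : 'M[R]_d) (nu : {perm gT}) g :
  nu \in Aut G -> g \in G -> (forall x, x \in G -> n *m rG x = rG (nu x) *m n) ->
  forall x, x \in G -> rG g *m n *m rG x = rG (alpha_of G g nu x) *m (rG g *m n).
Proof.
move=> nuA Gg n_rG x Gx; have Gnux : nu x \in G by rewrite Aut_closed.
rewrite permM /ad_aut conj_autE ?groupV // conjgE invgK.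
by rewrite !repr_mxM ?groupM ?groupV // -mulmxA n_rG // !mulmxA repr_mxKV.
Qed.

Theorem lemma4p3p3 (R : realType) (gT : finGroupType) (G : {group gT})
  (d : nat) (rG : mx_representation R G d)
  (n : 'M[R]_d) (nu : {perm gT}) (g : gT) :
  simple G -> ~~ abelian G ->
  mx_irreducible rG ->
  (exists2 x, x \in G & rG x != 1%:M) ->
  odd d ->
  n \in unitmx ->
  (exists2 k : nat, (0 < k)%N & n ^+ k = 1%:M) ->
  (forall x, x \in G -> exists2 y, y \in G & n *m rG x *m invmx n = rG y) ->
  nu \in Aut G ->
  (forall x, x \in G -> rG (nu x) = n *m rG x *m invmx n) ->
  g \in G ->
  ~~ odd #[alpha_of G g nu]%g ->
  (forall p : nat, prime p -> (p %| #[alpha_of G g nu]%g)%N ->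
     (#[alpha_of G g nu]%g.-1)%:R
       * Num.sqrt (#|fixed_in G (alpha_p (alpha_of G g nu) p)|%:R) < d%:R :> R) ->
  exists2 h, h \in G & eigenvalue (rG h *m n) 1.
Proof.
move=> _ _ irr _ odd_d n_unit [K K_gt0 nK] _ nuA rG_nu Gg even_a bound_a.
set a := alpha_of G g nu in even_a bound_a; set k := #[a]%g in even_a bound_a.
have n_rG x : x \in G -> n *m rG x = rG (nu x) *m n by move=> Gx; rewrite rG_nu ?mulmxKV.
have aA : a \in Aut G := alpha_of_Aut nuA Gg.
have m_rG := repr_alpha_of nuA Gg n_rG; set m := rG g *m n in m_rG *.
have [N N_gt0 mN] := repr_mul_normalizer_finite_order nuA n_rG K_gt0 nK Gg.
have mk : m ^+ k = 1%:M := repr_normalizer_exp_order odd_d irr N_gt0 mN aA m_rG even_a.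
have k_gt1 : (1 < k)%N by move: even_a; rewrite /k; case: #[a]%g (order_gt0 a) => [|[]].
have tr_lt j : (0 < j < k)%N -> k.-1%:R * `|\tr (m ^+ j)| < d%:R.
  move=> jk; have [p [p_pr p_a] ap] := cycle_exp_prime_divisor jk.
  apply: le_lt_trans (bound_a p p_pr p_a); apply: ler_wpM2l => //.
  have mjk : (m ^+ j) ^+ k = 1%:M by rewrite -exprM mulnC exprM mk expr1n.
  have tr_fixed := sqr_mxtrace_le_card_fixed odd_d irr (order_gt0 a) mjk (groupX j aA)
    (repr_normalizer_exp aA m_rG j).
  rewrite -sqrtr_sqr ler_sqrt // (le_trans tr_fixed) // ler_nat.
  by rewrite subset_leq_card ?fixed_in_cycle.
have tr_sum : 0 < \tr (\sum_(j < k) m ^+ j).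
  rewrite raddf_sum /= -(prednK (ltnW k_gt1)) big_ord_recl /= expr0 mxtrace1.
  apply: (sum_dominated_gt0 (t := fun j => \tr (m ^+ j.+1))) => [|j j_lt].
    by rewrite ltn_predRL.
  by apply: tr_lt; rewrite -ltn_predRL.
by exists g; last by apply: eigenvalue1_of_mxtrace_sum_pow mk (lt0r_neq0 tr_sum).
Qed.
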